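(* Let $m\ge1$, $s_1,\dots,s_m\in\mathbb{R}$ and $\alpha\in[0,1]$. For $\gamma\in[0,1]$ let $N(\gamma):=\sum_{i=1}^m\chi_{\alpha,\gamma}(s_i)$. Then $$\int_0^1\big(N(\gamma)-\gamma m\big)^2\,d\gamma\ \ge\ \frac1{12}.$$
   Context: For $r\in\mathbb{R}$, $\{r\}:=r-\lfloor r\rfloor$. For $\alpha\in\mathbb{R}$, $\gamma\in[0,1]$, $S_{\alpha,\alpha+\gamma}:=\{x\in[0,1]:\{x-\alpha\}\le\gamma\}$, and $\chi_{\alpha,\gamma}(x):=1$ if $\{x\}\in S_{\alpha,\alpha+\gamma}$, and $0$ otherwise. *)

From Stdlib Require Import Reals Lra Lia List.
Open Scope R_scope.

(* {r} := r - floor r ; Stdlib's frac_part r = r - IZR (Int_part r), Int_part = floor *)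
Definition frac (r : R) : R := frac_part r.

Definition in_S (alpha gamma x : R) : Prop :=
  0 <= x <= 1 /\ frac (x - alpha) <= gamma.

Definition chi (alpha gamma x : R) : R :=
  if Rle_dec 0 (frac x) then
    if Rle_dec (frac x) 1 then
      if Rle_dec (frac (frac x - alpha)) gamma then 1 else 0
    else 0
  else 0.

(* N(gamma) = sum_{i=1}^m chi_{alpha,gamma}(s_i), with s indexed 0..m-1 *)
Definition Ncount (m : nat) (s : nat -> R) (alpha gamma : R) : R :=
  fold_right Rplus 0 (map (fun i => chi alpha gamma (s i)) (seq 0 m)).

Definition integrand (m : nat) (s : nat -> R) (alpha : R) (gamma : R) : R :=
  (Ncount m s alpha gamma - gamma * INR m) ^ 2.

From Stdlib Require Import Reals Lra Lia List ZArith.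
From Coquelicot Require Import Coquelicot.
Open Scope R_scope.

(* Put t_i := {{s_i} - alpha}.  Then chi_{alpha,gamma}(s_i) is the
   indicator of t_i <= gamma, so N(gamma) = #{i : t_i <= gamma} is an
   integer-valued step function of gamma.  Hence (N(gamma) - gamma m)^2 is
   bounded below by the squared distance from gamma m to the nearest integer,
   a sawtooth whose integral over each cell [k/m, (k+1)/m] is exactly
   1/(12 m); the m cells of [0,1] give 1/12. *)

Definition step (t g : R) : R := if Rle_dec t g then 1 else 0.

Definition threshold (alpha x : R) : R := frac (frac x - alpha).

Lemma chi_step (alpha g x : R) : chi alpha g x = step (threshold alpha x) g.
Proof.
  unfold chi, step, threshold, frac.
  destruct (base_fp x) as [Hx0 Hx1].
  destruct (Rle_dec 0 (frac_part x)); [|lra].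
  destruct (Rle_dec (frac_part x) 1); [reflexivity|lra].
Qed.

Fixpoint count (l : list R) (g : R) : R :=
  match l with
  | nil => 0
  | t :: l' => step t g + count l' g
  end.

Lemma Ncount_count (m : nat) (s : nat -> R) (alpha g : R) :
  Ncount m s alpha g = count (map (fun i => threshold alpha (s i)) (seq 0 m)) g.
Proof.
  unfold Ncount. induction (seq 0 m) as [|i l IH]; simpl; [reflexivity|].
  now rewrite chi_step, IH.
Qed.

Lemma count_integer (l : list R) (g : R) : exists n : Z, count l g = IZR n.
Proof.
  induction l as [|t l [n Hn]]; simpl.
  - now exists 0%Z.
  - unfold step; destruct (Rle_dec t g).
    + exists (n + 1)%Z. rewrite plus_IZR, Hn. ring.
    + exists n. rewrite Hn. ring.
Qed.

(* Extensionality of integrability, stated with equality in R so that real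
   arithmetic tactics apply to the pointwise side condition. *)
Lemma ex_RInt_ext_R (f g : R -> R) (a b : R) :
  (forall x, Rmin a b < x < Rmax a b -> f x = g x) -> ex_RInt f a b -> ex_RInt g a b.
Proof. apply ex_RInt_ext. Qed.

Definition loc_int (f : R -> R) : Prop := forall a b, ex_RInt f a b.

Lemma loc_int_ext (f g : R -> R) : loc_int f -> (forall x, f x = g x) -> loc_int g.
Proof. intros Hf E a b. apply (ex_RInt_ext_R f); auto. Qed.

Lemma loc_int_zero : loc_int (fun _ => 0).
Proof. intros a b. apply ex_RInt_const. Qed.

Lemma loc_int_plus (f g : R -> R) :
  loc_int f -> loc_int g -> loc_int (fun x => f x + g x).
Proof. intros Hf Hg a b. apply (ex_RInt_plus f g); auto. Qed.

Lemma loc_int_scal (k : R) (f : R -> R) : loc_int f -> loc_int (fun x => k * f x).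
Proof. intros Hf a b. apply (ex_RInt_scal f a b k); auto. Qed.

Lemma loc_int_continuous (q : R -> R) : (forall x, continuous q x) -> loc_int q.
Proof. intros Hq a b. apply (@ex_RInt_continuous R_CompleteNormedModule). intros; apply Hq. Qed.

(* A step times a continuous function: on either side of the jump it agrees
   with a continuous function, and Chasles glues the two sides. *)
Lemma loc_int_step_mul (t : R) (q : R -> R) :
  (forall x, continuous q x) -> loc_int (fun g => step t g * q g).
Proof.
  intros Hq.
  assert (one_side : forall a b, (a <= t /\ b <= t) \/ (t <= a /\ t <= b) ->
            ex_RInt (fun g => step t g * q g) a b).
  { intros a b [[Ha Hb] | [Ha Hb]].
    - apply (ex_RInt_ext_R (fun _ => 0)); [|apply ex_RInt_const].
      intros x [_ Hx]. unfold step. destruct (Rle_dec t x); [|ring].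
      pose proof (Rmax_lub a b t Ha Hb). lra.
    - apply (ex_RInt_ext_R q); [|now apply loc_int_continuous].
      intros x [Hx _]. unfold step. destruct (Rle_dec t x); [ring|].
      pose proof (Rmin_glb a b t Ha Hb). lra. }
  intros a b. apply ex_RInt_Chasles with t; apply one_side;
    destruct (Rle_dec a t), (Rle_dec b t); lra.
Qed.

Lemma step_mul_step (t u g : R) : step t g * step u g = step (Rmax t u) g * 1.
Proof.
  unfold step, Rmax.
  destruct (Rle_dec t u), (Rle_dec t g), (Rle_dec u g); lra.
Qed.

Lemma loc_int_count_mul (l : list R) (q : R -> R) :
  (forall x, continuous q x) -> loc_int (fun g => count l g * q g).
Proof.
  intros Hq. induction l as [|t l IH]; simpl.
  - apply loc_int_ext with (fun _ => 0); [apply loc_int_zero | intros; ring].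
  - apply loc_int_ext with (fun g => step t g * q g + count l g * q g);
      [apply loc_int_plus; auto; now apply loc_int_step_mul | intros; ring].
Qed.

Lemma loc_int_step_count (t : R) (l : list R) :
  loc_int (fun g => step t g * count l g).
Proof.
  induction l as [|u l IH]; simpl.
  - apply loc_int_ext with (fun _ => 0); [apply loc_int_zero | intros; ring].
  - apply loc_int_ext with (fun g => step (Rmax t u) g * 1 + step t g * count l g).
    + apply loc_int_plus; auto. apply loc_int_step_mul. intros; apply continuous_const.
    + intros g. rewrite <- step_mul_step. ring.
Qed.

Lemma loc_int_count_count (l l' : list R) :
  loc_int (fun g => count l g * count l' g).
Proof.
  induction l as [|t l IH]; simpl.
  - apply loc_int_ext with (fun _ => 0); [apply loc_int_zero | intros; ring].
  - apply loc_int_ext with (fun g => step t g * count l' g + count l g * count l' g);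
      [apply loc_int_plus; auto; apply loc_int_step_count | intros; ring].
Qed.

Lemma loc_int_count_deviation (l : list R) (M : R) :
  loc_int (fun g => (count l g - g * M) ^ 2).
Proof.
  apply loc_int_ext with
    (fun g => count l g * count l g + (-2 * M) * (count l g * g) + (M * M) * (g * g)).
  - apply loc_int_plus; [apply loc_int_plus|].
    + apply loc_int_count_count.
    + apply loc_int_scal, loc_int_count_mul. intros; apply continuous_id.
    + apply loc_int_scal, loc_int_continuous. intros x.
      apply (@ex_derive_continuous R_AbsRing R_NormedModule). auto_derive; auto.
  - intros; ring.
Qed.

Lemma int_outside_cell (n k : Z) : IZR n <= IZR k \/ IZR k + 1 <= IZR n.
Proof.
  destruct (Z.le_gt_cases n k) as [Hnk | Hnk].
  - left. now apply IZR_le.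
  - right. rewrite <- plus_IZR. apply IZR_le. lia.
Qed.

Lemma sawtooth_rise_le (n k x : R) :
  n <= k \/ k + 1 <= n -> k <= x <= k + /2 -> (x - k) ^ 2 <= (n - x) ^ 2.
Proof. intros [Hn | Hn] Hx; nra. Qed.

Lemma sawtooth_fall_le (n k x : R) :
  n <= k \/ k + 1 <= n -> k + /2 <= x <= k + 1 -> (k + 1 - x) ^ 2 <= (n - x) ^ 2.
Proof. intros [Hn | Hn] Hx; nra. Qed.

(* The two halves of a tooth of the sawtooth g |-> dist(gM, Z)^2, of width
   1/(2M) each, have integral 1/(24M). *)
Lemma RInt_sawtooth_rise (M K : R) : 0 < M ->
  is_RInt (fun g => (g * M - K) ^ 2) (K / M) ((K + /2) / M) (1 / (24 * M)).
Proof.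
  intros HM.
  pose (F g := (g * M - K) ^ 3 / (3 * M)).
  replace (1 / (24 * M)) with (minus (F ((K + /2) / M)) (F (K / M)))
    by (unfold F, minus, plus, opp; simpl; field; lra).
  apply (is_RInt_derive F).
  - intros x _. unfold F. auto_derive; auto. field. lra.
  - intros x _. apply (@ex_derive_continuous R_AbsRing R_NormedModule). auto_derive; auto.
Qed.

Lemma RInt_sawtooth_fall (M K : R) : 0 < M ->
  is_RInt (fun g => (K + 1 - g * M) ^ 2) ((K + /2) / M) ((K + 1) / M) (1 / (24 * M)).
Proof.
  intros HM.
  pose (F g := - (K + 1 - g * M) ^ 3 / (3 * M)).
  replace (1 / (24 * M)) with (minus (F ((K + 1) / M)) (F ((K + /2) / M)))
    by (unfold F, minus, plus, opp; simpl; field; lra).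
  apply (is_RInt_derive F).
  - intros x _. unfold F. auto_derive; auto. field. lra.
  - intros x _. apply (@ex_derive_continuous R_AbsRing R_NormedModule). auto_derive; auto.
Qed.

Section CellBound.

Variables (M : R) (f : R -> R).
Hypothesis M_pos : 0 < M.
Hypothesis f_int : loc_int f.
Hypothesis f_ge : forall g, exists n : Z, (IZR n - g * M) ^ 2 <= f g.

Lemma div_le_compat (a b : R) : a <= b -> a / M <= b / M.
Proof. intros; apply Rmult_le_compat_r; [apply Rlt_le, Rinv_0_lt_compat|]; lra. Qed.

Lemma cell_rise_bound (k : Z) :
  1 / (24 * M) <= RInt f (IZR k / M) ((IZR k + /2) / M).
Proof.
  rewrite <- (is_RInt_unique _ _ _ _ (RInt_sawtooth_rise M (IZR k) M_pos)).
  apply RInt_le; [apply div_le_compat; lra | eexists; now apply RInt_sawtooth_rise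
                 | apply f_int |].
  intros x [H1 H2]. apply Rlt_div_l in H1; auto. apply Rlt_div_r in H2; auto.
  destruct (f_ge x) as [n Hn].
  eapply Rle_trans; [|exact Hn].
  apply sawtooth_rise_le; [apply int_outside_cell | lra].
Qed.

Lemma cell_fall_bound (k : Z) :
  1 / (24 * M) <= RInt f ((IZR k + /2) / M) ((IZR k + 1) / M).
Proof.
  rewrite <- (is_RInt_unique _ _ _ _ (RInt_sawtooth_fall M (IZR k) M_pos)).
  apply RInt_le; [apply div_le_compat; lra | eexists; now apply RInt_sawtooth_fall
                 | apply f_int |].
  intros x [H1 H2]. apply Rlt_div_l in H1; auto. apply Rlt_div_r in H2; auto.
  destruct (f_ge x) as [n Hn].
  eapply Rle_trans; [|exact Hn].
  apply sawtooth_fall_le; [apply int_outside_cell | lra].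
Qed.

Lemma cell_bound (k : Z) : 1 / (12 * M) <= RInt f (IZR k / M) ((IZR k + 1) / M).
Proof.
  rewrite <- (RInt_Chasles f _ ((IZR k + /2) / M)) by apply f_int.
  pose proof (cell_rise_bound k). pose proof (cell_fall_bound k).
  change (plus ?a ?b) with (a + b).
  replace (1 / (12 * M)) with (1 / (24 * M) + 1 / (24 * M)) by (field; lra).
  lra.
Qed.

Lemma cells_bound (n : nat) : INR n / (12 * M) <= RInt f 0 (INR n / M).
Proof.
  induction n as [|n IH].
  - simpl. replace (0 / M) with 0 by (field; lra).
    rewrite RInt_point. change (zero : R) with 0. unfold Rdiv; lra.
  - rewrite <- (RInt_Chasles f 0 (INR n / M)) by apply f_int.
    pose proof (cell_bound (Z.of_nat n)) as Hcell.
    rewrite <- INR_IZR_INZ in Hcell. rewrite S_INR.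
    change (plus ?a ?b) with (a + b).
    replace ((INR n + 1) / (12 * M)) with (INR n / (12 * M) + 1 / (12 * M))
      by (field; lra).
    lra.
Qed.

End CellBound.

Theorem lemma3p3 (m : nat) (s : nat -> R) (alpha : R)
  (hm : (1 <= m)%nat) (halpha : 0 <= alpha <= 1) :
  exists pr : Riemann_integrable (integrand m s alpha) 0 1,
    1 / 12 <= RiemannInt pr.
Proof.
  set (L := map (fun i => threshold alpha (s i)) (seq 0 m)).
  assert (integrand_eq : forall g, integrand m s alpha g = (count L g - g * INR m) ^ 2).
  { intros g. unfold integrand. now rewrite Ncount_count. }
  assert (m_pos : 0 < INR m) by (apply lt_0_INR; lia).
  assert (int_integrand : loc_int (integrand m s alpha)).
  { apply loc_int_ext with (fun g => (count L g - g * INR m) ^ 2);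
      [apply loc_int_count_deviation | intros; now rewrite integrand_eq]. }
  assert (integrand_ge : forall g, exists n : Z,
             (IZR n - g * INR m) ^ 2 <= integrand m s alpha g).
  { intros g. destruct (count_integer L g) as [n Hn]. exists n.
    rewrite integrand_eq, Hn. lra. }
  exists (ex_RInt_Reals_0 _ _ _ (int_integrand 0 1)).
  rewrite <- RInt_Reals.
  pose proof (cells_bound (INR m) _ m_pos int_integrand integrand_ge m) as H.
  replace (INR m / INR m) with 1 in H by (field; lra).
  replace (INR m / (12 * INR m)) with (1 / 12) in H by (field; lra).
  exact H.
Qed.
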